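(* Let $\sigma:\mathbb R^n\to\mathbb R^{n\times m}$ be of class $C^1$, $u:\mathbb R^n\to\mathbb R$ of class $C^2$ and $\bar x\in\mathbb R^n$. Consider $$h(a_1,a_2)=K(\bar x)\begin{pmatrix}a_1\\ a_2\end{pmatrix}\cdot \begin{pmatrix}a_1\\ a_2\end{pmatrix},\qquad a_1,a_2\in\mathbb R^m,\ |a_1|,|a_2|\leq 1.$$ Then the minimum of $h$ is nonpositive. If this minimum is negative, then it is attained at an eigenvector $v=(a_1,a_2)$ of $K(\bar x)$ associated with the minimal eigenvalue $\lambda$ of $K(\bar x)$, with $|a_1|=|a_2|=1$ and $h(v)=2\lambda$.
   Context: With $\sigma_i$ the columns of $\sigma$, $\nabla u\,\sigma(x)=(\nabla u(x)\cdot\sigma_1(x),\dots,\nabla u(x)\cdot\sigma_m(x))$ and $D(\nabla u\,\sigma)$ its $m\times n$ Jacobian, define $S(x)={}^t\sigma(x)\,{}^tD(\nabla u\,\sigma)(x)\in\mathbb R^{m\times m}$, $S^*=\frac12(S+{}^tS)$ and the symmetric matrix $K(x)=\begin{pmatrix}S^*(x)&{}^tS(x)\\ S(x)&S^*(x)\end{pmatrix}\in\mathbb R^{2m\times2m}$. *)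

From HB Require Import structures.
From mathcomp Require Import all_boot all_order all_algebra.
From mathcomp Require Import all_classical all_reals all_analysis.
Set Implicit Arguments. Unset Strict Implicit. Unset Printing Implicit Defensive.
Import Order.TTheory GRing.Theory Num.Theory.
Import numFieldNormedType.Exports.
Local Open Scope ring_scope.

Section Defs.
Variable R : realType.

Definition ebasis (n : nat) (j : 'I_n) : 'rV[R]_n := delta_mx 0 j.

Definition partial (n : nat) (W : normedModType R) (f : 'rV[R]_n -> W)
  (j : 'I_n) (x : 'rV[R]_n) : W := 'D_(ebasis j) f x.

Definition C1 (n : nat) (W : normedModType R) (f : 'rV[R]_n -> W) : Prop :=
  continuous f /\
  forall j : 'I_n, (forall x, derivable f x (ebasis j)) /\ continuous (partial f j).

Definition C2 (n : nat) (W : normedModType R) (f : 'rV[R]_n -> W) : Prop :=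
  C1 f /\ forall j : 'I_n, C1 (partial f j).

Definition grad (n : nat) (u : 'rV[R]_n -> R) (x : 'rV[R]_n) : 'rV[R]_n :=
  \row_j partial u j x.

Definition gradsig (n m : nat) (sigma : 'rV[R]_n -> 'M[R]_(n, m))
  (u : 'rV[R]_n -> R) (x : 'rV[R]_n) : 'rV[R]_m :=
  grad u x *m sigma x.

Definition jac_gradsig (n m : nat) (sigma : 'rV[R]_n -> 'M[R]_(n, m))
  (u : 'rV[R]_n -> R) (x : 'rV[R]_n) : 'M[R]_(m, n) :=
  \matrix_(i < m, j < n) partial (fun y => gradsig sigma u y 0 i) j x.

Definition Smat (n m : nat) (sigma : 'rV[R]_n -> 'M[R]_(n, m))
  (u : 'rV[R]_n -> R) (x : 'rV[R]_n) : 'M[R]_m :=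
  (sigma x)^T *m (jac_gradsig sigma u x)^T.

Definition Sstar (n m : nat) (sigma : 'rV[R]_n -> 'M[R]_(n, m))
  (u : 'rV[R]_n -> R) (x : 'rV[R]_n) : 'M[R]_m :=
  2^-1 *: (Smat sigma u x + (Smat sigma u x)^T).

Definition Kmat (n m : nat) (sigma : 'rV[R]_n -> 'M[R]_(n, m))
  (u : 'rV[R]_n -> R) (x : 'rV[R]_n) : 'M[R]_(m + m) :=
  block_mx (Sstar sigma u x) (Smat sigma u x)^T (Smat sigma u x) (Sstar sigma u x).

Definition enorm (k : nat) (a : 'cV[R]_k) : R :=
  Num.sqrt (\sum_i (a i 0) ^+ 2).

Definition qform (k : nat) (A : 'M[R]_k) (v : 'cV[R]_k) : R :=
  \sum_i (A *m v) i 0 * v i 0.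

Definition is_eigenvalue (k : nat) (A : 'M[R]_k) (lam : R) : Prop :=
  exists v : 'cV[R]_k, v != 0 /\ A *m v = lam *: v.

Definition is_min_eigenvalue (k : nat) (A : 'M[R]_k) (lam : R) : Prop :=
  is_eigenvalue A lam /\ forall mu, is_eigenvalue A mu -> lam <= mu.

End Defs.

From HB Require Import structures.
From mathcomp Require Import all_boot all_order all_algebra.
From mathcomp Require Import all_classical all_reals all_analysis.
From mathcomp Require Import lra.

(** K(xbar) is symmetric, so the minimum mu of its quadratic form on the unit
    sphere is its least eigenvalue, attained at an eigenvector v.  On the
    bidisk |a1|, |a2| <= 1 we have |a|^2 <= 2, hence h(a) >= mu |a|^2 >=
    min(0, 2 mu), and min h = min(0, 2 mu).  When mu < 0, the block shape of K
    balances the halves of v: with the skew-symmetric N = (S^T - S)/2 the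
    eigenvalue equations give N(v1 + v2) = mu (v1 - v2), and pairing with
    v1 + v2 yields mu (|v1|^2 - |v2|^2) = 0.  So sqrt 2 * v lies in the bidisk
    with |a1| = |a2| = 1 and h(sqrt 2 * v) = 2 mu. *)

Set Implicit Arguments.
Unset Strict Implicit.
Unset Printing Implicit Defensive.

Import Order.TTheory GRing.Theory Num.Theory.
Import numFieldNormedType.Exports.
Local Open Scope ring_scope.

Section Dot.
Variable R : comRingType.

Definition vdot k (x y : 'cV[R]_k) : R := (x^T *m y) 0 0.

Lemma vdotE k (x y : 'cV[R]_k) : vdot x y = \sum_i x i 0 * y i 0.
Proof. by rewrite /vdot mxE; apply: eq_bigr => i _; rewrite mxE. Qed.

Lemma vdotC k (x y : 'cV[R]_k) : vdot x y = vdot y x.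
Proof. by rewrite !vdotE; apply: eq_bigr => i _; rewrite mulrC. Qed.

Lemma vdot0r k (x : 'cV[R]_k) : vdot x 0 = 0.
Proof. by rewrite /vdot mulmx0 mxE. Qed.

Lemma vdotDr k (x y z : 'cV[R]_k) : vdot x (y + z) = vdot x y + vdot x z.
Proof. by rewrite /vdot mulmxDr mxE. Qed.

Lemma vdotNr k (x y : 'cV[R]_k) : vdot x (- y) = - vdot x y.
Proof. by rewrite /vdot mulmxN mxE. Qed.

Lemma vdotZr k (t : R) (x y : 'cV[R]_k) : vdot x (t *: y) = t * vdot x y.
Proof. by rewrite /vdot -scalemxAr mxE. Qed.

Lemma vdotDl k (x y z : 'cV[R]_k) : vdot (x + y) z = vdot x z + vdot y z.
Proof. by rewrite vdotC vdotDr !(vdotC z). Qed.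

Lemma vdotNl k (x y : 'cV[R]_k) : vdot (- x) y = - vdot x y.
Proof. by rewrite vdotC vdotNr vdotC. Qed.

Lemma vdotZl k (t : R) (x y : 'cV[R]_k) : vdot (t *: x) y = t * vdot x y.
Proof. by rewrite vdotC vdotZr vdotC. Qed.

Lemma vdot_mulmx_tr k (A : 'M[R]_k) (x y : 'cV[R]_k) :
  vdot x (A *m y) = vdot (A^T *m x) y.
Proof. by rewrite /vdot trmx_mul trmxK mulmxA. Qed.

Lemma vdot_col_mx k1 k2 (a c : 'cV[R]_k1) (b d : 'cV[R]_k2) :
  vdot (col_mx a b) (col_mx c d) = vdot a c + vdot b d.
Proof. by rewrite /vdot tr_col_mx mul_row_col mxE. Qed.

End Dot.

Section RealDot.
Variable R : realFieldType.

Lemma vdot_ge0 k (x : 'cV[R]_k) : 0 <= vdot x x.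
Proof. by rewrite vdotE; apply: sumr_ge0 => i _; rewrite -expr2 sqr_ge0. Qed.

Lemma vdot_eq0 k (x : 'cV[R]_k) : (vdot x x == 0) = (x == 0).
Proof.
apply/eqP/eqP => [|->]; last exact: vdot0r.
rewrite vdotE => /psumr_eq0P x0; apply/matrixP => i j; rewrite ord1 mxE.
by apply/eqP; rewrite -sqrf_eq0 expr2; apply/eqP/x0 => // l _; rewrite -expr2 sqr_ge0.
Qed.

Lemma vdot_gt0 k (x : 'cV[R]_k) : (0 < vdot x x) = (x != 0).
Proof. by rewrite lt_def vdot_eq0 vdot_ge0 andbT. Qed.

Lemma sqr_entry_le_vdot k (x : 'cV[R]_k) i : x i 0 ^+ 2 <= vdot x x.
Proof.
rewrite vdotE (bigD1 i) //= -expr2 lerDl.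
by apply: sumr_ge0 => j _; rewrite -expr2 sqr_ge0.
Qed.

Lemma vdot_skew k (N : 'M[R]_k) (x : 'cV[R]_k) : N^T = - N -> vdot x (N *m x) = 0.
Proof.
move=> skewN; have : vdot x (N *m x) = - vdot x (N *m x).
  by rewrite {1}vdot_mulmx_tr skewN mulNmx vdotNl vdotC.
lra.
Qed.

Lemma lin_le_quad_le0 (a b : R) : (forall t, 0 < t -> t * b <= t ^+ 2 * a) -> b <= 0.
Proof.
move=> H; rewrite leNgt; apply/negP => b_gt0.
have a1_gt0 : 0 < `|a| + 1 by rewrite ltr_wpDl.
pose t := b / (`|a| + 1).
have t_gt0 : 0 < t by rewrite divr_gt0.
have tE : t * (`|a| + 1) = b by rewrite divfK ?gt_eqF.
have := H t t_gt0; have := ler_norm a; nra.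
Qed.

Lemma psd_quad_eq0 k (P : 'M[R]_k) (v : 'cV[R]_k) : P^T = P ->
  (forall w, 0 <= vdot w (P *m w)) -> vdot v (P *m v) = 0 -> P *m v = 0.
Proof.
move=> Psym Ppsd Pv0; apply/eqP; rewrite -vdot_eq0 eq_le vdot_ge0 andbT.
set e := P *m v in Pv0 *.
have vPe : vdot v (P *m e) = vdot e e by rewrite vdot_mulmx_tr Psym vdotC.
suff : 2 * vdot e e <= 0 by rewrite pmulr_rle0.
apply: (@lin_le_quad_le0 (vdot e (P *m e))) => t t_gt0.
(* 0 <= q(v - t e) = - 2 t |e|^2 + t^2 q(e) *)
have := Ppsd (v - t *: e); rewrite mulmxBr -scalemxAr -/e.
rewrite !(vdotDl, vdotDr, vdotNl, vdotNr, vdotZl, vdotZr) Pv0 vPe; nra.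
Qed.

Lemma rayleigh_min_eigenvector k (A : 'M[R]_k) (v : 'cV[R]_k) :
  A^T = A -> vdot v v = 1 ->
  (forall w, vdot v (A *m v) * vdot w w <= vdot w (A *m w)) ->
  A *m v = vdot v (A *m v) *: v.
Proof.
move=> Asym v1 vmin; apply/eqP; rewrite -subr_eq0 -mul_scalar_mx -mulmxBl.
apply/eqP/psd_quad_eq0 => [|w|].
- by rewrite linearB /= Asym tr_scalar_mx.
- by rewrite mulmxBl mul_scalar_mx vdotDr vdotNr vdotZr subr_ge0.
- by rewrite mulmxBl mul_scalar_mx vdotDr vdotNr vdotZr v1 mulr1 subrr.
Qed.

Lemma quad_col_mx_ge k (A : 'M[R]_(k + k)) (mu : R) (a1 a2 : 'cV[R]_k) :
  (forall w, mu * vdot w w <= vdot w (A *m w)) ->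
  vdot a1 a1 <= 1 -> vdot a2 a2 <= 1 ->
  Num.min 0 (2 * mu) <= vdot (col_mx a1 a2) (A *m col_mx a1 a2).
Proof.
move=> Amin a11 a21; apply: le_trans (Amin _); rewrite vdot_col_mx.
have := vdot_ge0 a1; have := vdot_ge0 a2.
by have [mu_ge0|mu_lt0] := leP 0 mu; [rewrite min_l|rewrite min_r]; nra.
Qed.

End RealDot.

Section BlockMatrix.
Variable R : realFieldType.

Definition sym_part k (S : 'M[R]_k) := 2^-1 *: (S + S^T).

Definition Kblock k (S : 'M[R]_k) : 'M[R]_(k + k) :=
  block_mx (sym_part S) S^T S (sym_part S).

Lemma Kblock_sym k (S : 'M[R]_k) : (Kblock S)^T = Kblock S.
Proof.
have symS : (sym_part S)^T = sym_part S by apply/matrixP => i j; rewrite !mxE addrC.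
by rewrite /Kblock tr_block_mx trmxK symS.
Qed.

Lemma Kblock_eigen_balanced k (S : 'M[R]_k) (a1 a2 : 'cV[R]_k) (lam : R) :
  Kblock S *m col_mx a1 a2 = lam *: col_mx a1 a2 -> lam != 0 ->
  vdot a1 a1 = vdot a2 a2.
Proof.
rewrite /Kblock mul_block_col scale_col_mx => /eq_col_mx [eq1 eq2] lam_neq0.
pose N := 2^-1 *: (S^T - S).
have skewN : N^T = - N by apply/matrixP => i j; rewrite !mxE; lra.
have N_sum : N *m (a1 + a2) = lam *: (a1 - a2).
  have E1 : sym_part S - S = N by apply/matrixP => i j; rewrite !mxE; lra.
  have E2 : S^T - sym_part S = N by apply/matrixP => i j; rewrite !mxE; lra.
  by rewrite mulmxDr -{1}E1 -E2 !mulmxBl scalerBr -eq1 -eq2 opprD addrACA.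
have := vdot_skew (a1 + a2) skewN; rewrite N_sum vdotZr => /eqP.
rewrite mulf_eq0 (negbTE lam_neq0) /= => /eqP.
rewrite !(vdotDl, vdotDr, vdotNr) (vdotC a2 a1); lra.
Qed.

End BlockMatrix.

Section RayleighQuotient.
Variable R : realType.
Local Open Scope classical_set_scope.

Lemma continuous_quad_trmx k (A : 'M[R]_k) :
  continuous (fun w : 'rV[R]_k => vdot w^T (A *m w^T)).
Proof.
have -> : (fun w : 'rV[R]_k => vdot w^T (A *m w^T)) =
    fun w => \sum_i w 0 i * \sum_j A i j * w 0 j.
  apply: funext => w; rewrite vdotE; apply: eq_bigr => i _.
  by rewrite !mxE; congr (_ * _); apply: eq_bigr => j _; rewrite mxE.
apply: (@continuous_big _ _ _ _ _ add_continuous) => i _ w.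
apply: continuousM; first exact: coord_continuous.
apply: (@continuous_big _ _ _ _ _ add_continuous) => j _ {}w.
by apply: continuousM; [exact: cst_continuous | exact: coord_continuous].
Qed.

Lemma compact_unit_sphere k : compact [set w : 'rV[R]_k | vdot w^T w^T = 1].
Proof.
apply: bounded_closed_compact.
  exists 1; split => // M M_gt1 w /= w1.
  rewrite [leLHS]/Num.Def.normr /= mx_normrE.
  apply: bigmax_le => [|[i j] _ /=]; first by rewrite ltW // (lt_trans _ M_gt1).
  have := sqr_entry_le_vdot w^T j; rewrite w1 ord1 mxE => wj.
  by rewrite ler_norml; apply/andP; split; nra.
have -> : [set w : 'rV[R]_k | vdot w^T w^T = 1] =
    (fun w => vdot w^T (1%:M *m w^T)) @^-1` [set 1].
  by apply/seteqP; split => w /=; rewrite mul1mx.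
by apply: preimage_closed => [w _|]; [exact: continuous_quad_trmx | exact: closed_eq].
Qed.

Lemma exists_rayleigh_minimizer k (A : 'M[R]_k) : (0 < k)%N ->
  exists2 v : 'cV[R]_k, vdot v v = 1 &
    forall w, vdot v (A *m v) * vdot w w <= vdot w (A *m w).
Proof.
move=> k_gt0; set S := [set w : 'rV[R]_k | vdot w^T w^T = 1].
have S_neq0 : S !=set0.
  exists (delta_mx 0 (Ordinal k_gt0)).
  by rewrite /S /= /vdot trmxK trmx_delta mul_delta_mx mxE !eqxx.
have [c Sc cmin] := EVT_min_rV S_neq0 (@compact_unit_sphere k)
  (continuous_subspaceT (@continuous_quad_trmx k A)).
rewrite inE in Sc; exists c^T => // w.
have [->|w_neq0] := eqVneq w 0.
  by rewrite mulmx0 !vdot0r mulr0.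
have w_gt0 : 0 < vdot w w by rewrite vdot_gt0.
pose s := Num.sqrt (vdot w w).
have s_gt0 : 0 < s by rewrite sqrtr_gt0.
have sc x : s^-1 * (s^-1 * x) = x / vdot w w.
  by rewrite mulrA -invfM -expr2 sqr_sqrtr ?ltW // mulrC.
have := cmin (s^-1 *: w)^T; rewrite !inE /S /= trmxK -scalemxAr.
rewrite !(vdotZl, vdotZr) !sc divff ?gt_eqF // => /(_ erefl).
by rewrite ler_pdivlMr.
Qed.

Lemma symmetric_min_eigenpair k (A : 'M[R]_k) : A^T = A -> (0 < k)%N ->
  exists v mu, [/\ vdot v v = 1, A *m v = mu *: v, is_min_eigenvalue A mu &
                   forall w, mu * vdot w w <= vdot w (A *m w)].
Proof.
move=> Asym k_gt0; have [v v1 vmin] := exists_rayleigh_minimizer A k_gt0.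
exists v, (vdot v (A *m v)); split => //; first exact: rayleigh_min_eigenvector.
split => [|mu [w [w_neq0 Aw]]].
  exists v; split; last exact: rayleigh_min_eigenvector.
  by rewrite -vdot_gt0 v1 ltr01.
by have := vmin w; rewrite Aw vdotZr ler_pM2r // vdot_gt0.
Qed.

Lemma Kblock_eigen_unit_halves k (S : 'M[R]_k) (v : 'cV[R]_(k + k)) (lam : R) :
  Kblock S *m v = lam *: v -> lam != 0 -> vdot v v = 1 ->
  exists a1 a2,
    [/\ col_mx a1 a2 = Num.sqrt 2 *: v, vdot a1 a1 = 1 & vdot a2 a2 = 1].
Proof.
rewrite -[v]vsubmxK => Sv lam_neq0; rewrite vdot_col_mx => v1.
have balanced := Kblock_eigen_balanced Sv lam_neq0.
exists (Num.sqrt 2 *: usubmx v), (Num.sqrt 2 *: dsubmx v).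
rewrite scale_col_mx !(vdotZl, vdotZr) !mulrA -expr2 sqr_sqrtr ?ler0n //.
by split => //; lra.
Qed.

Lemma qformE k (A : 'M[R]_k) (x : 'cV[R]_k) : qform A x = vdot x (A *m x).
Proof. by rewrite vdotE; apply: eq_bigr => i _; rewrite mulrC. Qed.

Lemma enormE k (x : 'cV[R]_k) : enorm x = Num.sqrt (vdot x x).
Proof. by rewrite vdotE; congr Num.sqrt; apply: eq_bigr => i _; rewrite expr2. Qed.

Lemma enorm0 k : enorm (0 : 'cV[R]_k) = 0.
Proof. by rewrite enormE vdot0r sqrtr0. Qed.

Lemma enorm_le1 k (x : 'cV[R]_k) : (enorm x <= 1) = (vdot x x <= 1).
Proof. by rewrite enormE -{1}sqrtr1 ler_sqrt. Qed.

Lemma enorm_eq1 k (x : 'cV[R]_k) : vdot x x = 1 -> enorm x = 1.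
Proof. by rewrite enormE => ->; rewrite sqrtr1. Qed.

End RayleighQuotient.

Theorem proposition4 (R : realType) (n m : nat)
  (sigma : 'rV[R]_n -> 'M[R]_(n, m)) (u : 'rV[R]_n -> R) (xbar : 'rV[R]_n) :
  C1 sigma -> C2 u ->
  let K := Kmat sigma u xbar in
  let h := fun a1 a2 : 'cV[R]_m => qform K (col_mx a1 a2) in
  exists c : R,
    (* c is the minimum of h over |a1| <= 1, |a2| <= 1 *)
    ((exists a1 a2 : 'cV[R]_m, enorm a1 <= 1 /\ enorm a2 <= 1 /\ h a1 a2 = c) /\
     (forall a1 a2 : 'cV[R]_m, enorm a1 <= 1 -> enorm a2 <= 1 -> c <= h a1 a2)) /\
    c <= 0 /\
    (c < 0 ->
     exists (a1 a2 : 'cV[R]_m) (lam : R),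
       is_min_eigenvalue K lam /\
       K *m col_mx a1 a2 = lam *: col_mx a1 a2 /\
       enorm a1 = 1 /\ enorm a2 = 1 /\
       h a1 a2 = c /\ h a1 a2 = 2 * lam).
Proof.
move=> _ _ K h.
have KE : K = Kblock (Smat sigma u xbar) by [].
have hE a1 a2 : h a1 a2 = vdot (col_mx a1 a2) (K *m col_mx a1 a2) by exact: qformE.
have h00 : h 0 0 = 0 by rewrite hE col_mx0 mulmx0 vdot0r.
have [m0|m_gt0] := posnP m.
  subst m; exists 0; split; [split|split] => //; last by rewrite ltxx.
  - by exists 0, 0; rewrite enorm0 ler01 h00.
  - by move=> a1 a2 _ _; rewrite [a1]flatmx0 [a2]flatmx0 h00.
have [v [mu [v1 Kv Kmin Kray]]] :=
  symmetric_min_eigenpair (Kblock_sym (Smat sigma u xbar)) (ltn_addr m m_gt0).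
rewrite -KE in Kv Kmin Kray.
have h_ge a1 a2 : enorm a1 <= 1 -> enorm a2 <= 1 -> Num.min 0 (2 * mu) <= h a1 a2.
  by rewrite !enorm_le1 hE; exact: quad_col_mx_ge.
have [mu_ge0|mu_lt0] := leP 0 mu.
  exists 0; split; [split|split] => //; last by rewrite ltxx.
  - by exists 0, 0; rewrite enorm0 ler01 h00.
  - by move=> a1 a2 /h_ge/[apply]; rewrite min_l // mulr_ge0.
have [a1 [a2 [aE a11 a21]]] := Kblock_eigen_unit_halves Kv (ltr0_neq0 mu_lt0) v1.
have h_a : h a1 a2 = 2 * mu.
  rewrite hE aE -scalemxAr Kv !(vdotZl, vdotZr) v1 mulr1 mulrA -expr2.
  by rewrite sqr_sqrtr ?ler0n.
exists (2 * mu); split; [split|split].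
- by exists a1, a2; rewrite !enorm_le1 a11 a21 lexx.
- by move=> b1 b2 /h_ge/[apply]; rewrite min_r // pmulr_rle0 ?ltW.
- by rewrite pmulr_rle0 ?ltW.
- move=> _; exists a1, a2, mu; rewrite h_a !enorm_eq1 //.
  by rewrite aE -scalemxAr Kv !scalerA mulrC.
Qed.
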